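(* Let $R$ be a finitely generated $\mathbb{C}$-algebra which is a domain, and let $r,s,r',s'\in R$. For $a,b\in R$ put $A_{a,b}:=R[U,V]/(aU-bV-1)$. If $\operatorname{rad}(r,s)=\operatorname{rad}(r',s')$ (radicals of the ideals generated by $r,s$ and by $r',s'$), then $A_{r,s}[T]\cong A_{r',s'}[T]$, where $T$ is an indeterminate. *)

From HB Require Import structures.
From mathcomp Require Import all_boot all_order all_algebra.
From mathcomp Require Import reals.
From mathcomp Require Import complex.

Set Implicit Arguments.
Unset Strict Implicit.
Unset Printing Implicit Defensive.

Import Order.TTheory GRing.Theory Num.Theory.
Local Open Scope ring_scope.

(* The field of complex numbers: R[i] for R : realType (every realType is
   a complete archimedean ordered field, i.e. a copy of the real numbers). *)
Notation CC R := (complex R).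

Definition fg_algebra (K A : nzRingType) (iota : K -> A) : Prop :=
  exists gens : seq A,
    forall S : A -> Prop,
      (forall c : K, S (iota c)) ->
      (forall x, x \in gens -> S x) ->
      (forall x y, S x -> S y -> S (x + y)) ->
      (forall x y, S x -> S y -> S (x * y)) ->
      forall x, S x.

Definition in_ideal2 (A : comNzRingType) (a b x : A) : Prop :=
  exists u v : A, x = u * a + v * b.

Definition in_rad2 (A : comNzRingType) (a b x : A) : Prop :=
  exists n : nat, in_ideal2 a b (x ^+ n).

Definition same_rad2 (A : comNzRingType) (a b a' b' : A) : Prop :=
  forall x : A, in_rad2 a b x <-> in_rad2 a' b' x.

(* The polynomial ring R[U,V,T], encoded as {poly {poly {poly R}}}:
   innermost variable U, middle variable V, outermost variable T. *)
Definition PUVT (R : nzRingType) := {poly {poly {poly R}}}.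

Definition cstUVT (R : nzRingType) (c : R) : PUVT R := c%:P%:P%:P.
Definition varU (R : nzRingType) : PUVT R := ('X : {poly R})%:P%:P.
Definition varV (R : nzRingType) : PUVT R := ('X : {poly {poly R}})%:P.
Definition varT (R : nzRingType) : PUVT R := 'X.

(* The generator  aU - bV - 1  of the ideal defining A_{a,b};
   A_{a,b}[T] = R[U,V,T] / (aU - bV - 1). *)
Definition relAB (R : comNzRingType) (a b : R) : PUVT R :=
  cstUVT a * varU R - cstUVT b * varV R - 1.

(* Congruence modulo the principal ideal (f) of R[U,V,T]: equality in the
   quotient ring R[U,V,T]/(f). *)
Definition cong_mod (R : comNzRingType) (f x y : PUVT R) : Prop :=
  exists q : PUVT R, x - y = q * f.

Definition quot_RAlg_iso (R : comNzRingType) (f g : PUVT R)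
    (phi : PUVT R -> PUVT R) : Prop :=
  (forall x y, cong_mod f x y -> cong_mod g (phi x) (phi y)) /\
  (forall x y, cong_mod g (phi (x + y)) (phi x + phi y)) /\
  (forall x y, cong_mod g (phi (x * y)) (phi x * phi y)) /\
  (forall c : R, cong_mod g (phi (cstUVT c)) (cstUVT c)) /\
  (forall x y, cong_mod g (phi x) (phi y) -> cong_mod f x y) /\
  (forall y, exists x, cong_mod g (phi x) y).

Definition AT_iso (R : comNzRingType) (a b a' b' : R) : Prop :=
  exists phi : PUVT R -> PUVT R, quot_RAlg_iso (relAB a b) (relAB a' b') phi.

From HB Require Import structures.
From mathcomp Require Import all_boot all_order all_algebra.
From mathcomp Require Import ring zify.
From mathcomp Require Import reals complex.
Import GRing.Theory.
Local Open Scope ring_scope.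

(* Since rU - sV = 1 in A_{r,s} and r, s lie in rad(r', s'), expanding
   (rU - sV)^(k+l) shows that r'c - s'd = 1 in A_{r,s} for some c, d in R[U,V];
   symmetrically ra - sb = 1 in A_{r',s'}.  The R-algebra endomorphism of
   R[U,V,T] given by U |-> a + sT, V |-> b + rT, T |-> V c(U', V') - U d(U', V'),
   with U', V' the images of U, V, sends rU - sV - 1 to ra - sb - 1 and so
   descends to A_{r,s}[T] -> A_{r',s'}[T]; the map built in the same way from
   (r', s', c, d, a, b) is inverse to it, because T |-> T (r'c - s'd) = T. *)

Section CongruenceModulo.

Context {R : comNzRingType}.

Section FixedModulus.

Context {h : PUVT R}.

Lemma cong_mod_refl x : cong_mod h x x.
Proof. by exists 0; rewrite subrr mul0r. Qed.

Lemma cong_mod_sym {x y} : cong_mod h x y -> cong_mod h y x.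
Proof. by case=> q e; exists (- q); rewrite mulNr -e opprB. Qed.

Lemma cong_mod_trans {x y z} : cong_mod h x y -> cong_mod h y z -> cong_mod h x z.
Proof. by case=> q e [q' e']; exists (q + q'); rewrite mulrDl -e -e'; ring. Qed.

Lemma cong_modD {x y x' y'} :
  cong_mod h x y -> cong_mod h x' y' -> cong_mod h (x + x') (y + y').
Proof. by case=> q e [q' e']; exists (q + q'); rewrite mulrDl -e -e'; ring. Qed.

Lemma cong_modB {x y x' y'} :
  cong_mod h x y -> cong_mod h x' y' -> cong_mod h (x - x') (y - y').
Proof. by case=> q e [q' e']; exists (q - q'); rewrite mulrBl -e -e'; ring. Qed.

Lemma cong_modMl z {x y} : cong_mod h x y -> cong_mod h (z * x) (z * y).
Proof. by case=> q e; exists (z * q); rewrite -mulrA -e; ring. Qed.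

Lemma cong_modM {x y x' y'} :
  cong_mod h x y -> cong_mod h x' y' -> cong_mod h (x * x') (y * y').
Proof.
move=> hxy hxy'; apply: (@cong_mod_trans _ (x * y')); first exact: cong_modMl.
by rewrite ![_ * y']mulrC; apply: cong_modMl.
Qed.

Lemma cong_mod_addMl x y : cong_mod h (x + y * h) x.
Proof. by exists y; ring. Qed.

Lemma cong_mod_mulr1 z {x} : cong_mod h x 1 -> cong_mod h (z * x) z.
Proof. by move/(cong_modMl z); rewrite mulr1. Qed.

End FixedModulus.

Lemma cong_mod_rmorph {h h' : PUVT R} (H : {rmorphism PUVT R -> PUVT R}) {x y} :
  cong_mod h' (H h) 0 -> cong_mod h x y -> cong_mod h' (H x) (H y).
Proof.
case=> q e [q' e']; exists (H q' * q).
by rewrite -rmorphB e' rmorphM -mulrA -e subr0.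
Qed.

Lemma cong_mod_rmorph_poly {A : nzRingType} {h : PUVT R}
    (H : {rmorphism PUVT R -> PUVT R}) (j : {rmorphism {poly A} -> PUVT R}) :
  (forall c, cong_mod h (H (j c%:P)) (j c%:P)) -> cong_mod h (H (j 'X)) (j 'X) ->
  forall p, cong_mod h (H (j p)) (j p).
Proof.
move=> hC hX; elim/poly_ind=> [|p c IHp]; first by rewrite !rmorph0; apply: cong_mod_refl.
by rewrite !rmorphD !rmorphM; apply: cong_modD => //; apply: cong_modM.
Qed.

End CongruenceModulo.

Lemma ideal_exprDn {A : comNzRingType} {J : A -> Prop} {x y : A} {k l : nat} :
  (forall u v, J u -> J v -> J (u + v)) -> (forall a u, J u -> J (a * u)) ->
  J (x ^+ k) -> J (y ^+ l) -> J ((x + y) ^+ (k + l)).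
Proof.
move=> JD JM Jx Jy; rewrite exprDn.
have J0 : J 0 by rewrite -(mul0r (x ^+ k)); apply: (JM).
apply: big_ind => // i _; rewrite -mulr_natl; apply: (JM).
have [li | il] := leqP l i.
  by rewrite -(subnK li) exprD mulrA; apply: (JM).
have ki : (k <= k + l - i)%N by lia.
by rewrite -(subnK ki) exprD mulrAC; apply: (JM).
Qed.

Section Twist.

Context {R : comNzRingType}.

Local Notation P := (PUVT R).
Local Notation Q := {poly {poly R}}.
Local Notation cst := (@cstUVT R).
Local Notation U := (varU R).
Local Notation V := (varV R).
Local Notation T := (varT R).

Definition relUV (a b : R) : Q := a%:P%:P * ('X : {poly R})%:P - b%:P%:P * 'X - 1.

Lemma relAB_polyC a b : relAB a b = (relUV a b)%:P.
Proof. by rewrite /relUV !rmorphB !rmorphM rmorph1. Qed.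

Definition bezout_mod (r s : R) (h a b : Q) : Prop :=
  exists q : Q, r%:P%:P * a - s%:P%:P * b - 1 = q * h.

Lemma bezout_mod_rad {r s r' s' : R} :
  in_rad2 r' s' r -> in_rad2 r' s' s ->
  exists a b : Q, bezout_mod r' s' (relUV r s) a b.
Proof.
move=> [k [u [v er]]] [l [u' [v' es]]].
pose J (x : Q) := exists a b q : Q,
  x = r'%:P%:P * a - s'%:P%:P * b + q * relUV r s.
have JD x y : J x -> J y -> J (x + y).
  move=> [a [b [q ->]]] [a' [b' [q' ->]]].
  by exists (a + a'), (b + b'), (q + q'); ring.
have JM c x : J x -> J (c * x).
  by move=> [a [b [q ->]]]; exists (c * a), (c * b), (c * q); ring.
have Jr : J ((r%:P%:P * ('X : {poly R})%:P) ^+ k).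
  exists (u%:P%:P * ('X : {poly R})%:P ^+ k), (- v%:P%:P * ('X : {poly R})%:P ^+ k), 0.
  by rewrite exprMn -!rmorphXn er !rmorphD !rmorphM; ring.
have Js : J ((- (s%:P%:P * 'X)) ^+ l).
  rewrite exprNn; apply: JM; exists (u'%:P%:P * 'X ^+ l), (- v'%:P%:P * 'X ^+ l), 0.
  by rewrite exprMn -!rmorphXn es !rmorphD !rmorphM; ring.
have [a [b [q e]]] := ideal_exprDn JD JM Jr Js.
(* r U - s V = 1 + relUV r s, so every power of it is 1 modulo relUV r s *)
have [w ew] : exists w,
    (r%:P%:P * ('X : {poly R})%:P + - (s%:P%:P * 'X)) ^+ (k + l) - 1 = w * relUV r s.
  by eexists; rewrite -(expr1n _ (k + l)) subrXX; exact: mulrC.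
by rewrite e in ew; exists a, b, (w - q); rewrite mulrBl -ew; ring.
Qed.

Lemma bezout_mod_relAB {r s r' s' : R} {a b : Q} :
  bezout_mod r s (relUV r' s') a b ->
  cong_mod (relAB r' s') (cst r * a%:P - cst s * b%:P) 1.
Proof.
case=> q e; exists q%:P.
by rewrite relAB_polyC -[RHS]rmorphM -e !rmorphB !rmorphM rmorph1.
Qed.

Lemma commr_rmorph_com {A : nzRingType} (g : {rmorphism A -> P}) u :
  commr_rmorph g u.
Proof. by move=> x; rewrite /GRing.comm mulrC. Qed.

Definition cstP : {rmorphism R -> P} :=
  (@polyC {poly {poly R}} \o (@polyC {poly R} \o @polyC R))%FUN.

Definition evalU (u : P) : {rmorphism {poly R} -> P} :=
  horner_morph (commr_rmorph_com cstP u).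

Definition evalUV (u v : P) : {rmorphism Q -> P} :=
  horner_morph (commr_rmorph_com (evalU u) v).

Definition evalUVT (u v t : P) : {rmorphism P -> P} :=
  horner_morph (commr_rmorph_com (evalUV u v) t).

Lemma evalUVT_cst u v t c : evalUVT u v t (cst c) = cst c.
Proof.
by rewrite /evalUVT /= !horner_morphC /evalUV /= horner_morphC /evalU /= horner_morphC.
Qed.

Lemma evalUVT_polyC u v t (x : Q) : evalUVT u v t x%:P = evalUV u v x.
Proof. by rewrite /evalUVT /= horner_morphC. Qed.

Lemma evalUVT_U u v t : evalUVT u v t U = u.
Proof.
by rewrite /varU evalUVT_polyC /evalUV /= horner_morphC /evalU /= horner_morphX.
Qed.

Lemma evalUVT_V u v t : evalUVT u v t V = v.
Proof. by rewrite /varV evalUVT_polyC /evalUV /= horner_morphX. Qed.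

Lemma evalUVT_T u v t : evalUVT u v t T = t.
Proof. by rewrite /varT /evalUVT /= horner_morphX. Qed.

Lemma cong_mod_rmorph_idUV {h : P} {H : {rmorphism P -> P}} :
  (forall c, H (cst c) = cst c) -> cong_mod h (H U) U -> cong_mod h (H V) V ->
  forall x : Q, cong_mod h (H x%:P) x%:P.
Proof.
move=> HC HU HV.
apply: (cong_mod_rmorph_poly H polyC) => [c|]; last exact: HV.
apply: (cong_mod_rmorph_poly H (polyC \o polyC)) c => [c|]; last exact: HU.
by rewrite /= HC; apply: cong_mod_refl.
Qed.

Lemma cong_mod_rmorph_id {h : P} {H : {rmorphism P -> P}} :
  (forall c, H (cst c) = cst c) -> cong_mod h (H U) U -> cong_mod h (H V) V ->
  cong_mod h (H T) T -> forall x : P, cong_mod h (H x) x.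
Proof.
move=> HC HU HV HT; apply: (cong_mod_rmorph_poly H idfun) => [c|//].
exact: cong_mod_rmorph_idUV.
Qed.

Definition twist (r s : R) (a b c d : Q) : {rmorphism P -> P} :=
  let u := a%:P + cst s * T in let v := b%:P + cst r * T in
  evalUVT u v (V * evalUV u v c - U * evalUV u v d).

Section TwistEquations.

Variables (r s : R) (a b c d : Q).
Local Notation F := (twist r s a b c d).

Lemma twist_cst x : F (cst x) = cst x.
Proof. exact: evalUVT_cst. Qed.

Lemma twistU : F U = a%:P + cst s * T.
Proof. exact: evalUVT_U. Qed.

Lemma twistV : F V = b%:P + cst r * T.
Proof. exact: evalUVT_V. Qed.

Lemma twistT : F T = V * F c%:P - U * F d%:P.
Proof. by rewrite !evalUVT_polyC; exact: evalUVT_T. Qed.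

End TwistEquations.

Lemma twist_relAB {r s r' s' : R} {a b : Q} (c d : Q) :
  bezout_mod r s (relUV r' s') a b ->
  cong_mod (relAB r' s') (twist r s a b c d (relAB r s)) 0.
Proof.
move=> /bezout_mod_relAB hab.
have -> : twist r s a b c d (relAB r s) = cst r * a%:P - cst s * b%:P - 1.
  rewrite /relAB !rmorphB (rmorph1 (twist r s a b c d)) !rmorphM.
  by rewrite (twist_cst _ _ _ _ _ _ r) (twist_cst _ _ _ _ _ _ s) twistU twistV; ring.
by rewrite -(subrr 1); apply: cong_modB hab (cong_mod_refl _).
Qed.

Lemma twist_cong {r s r' s' : R} {a b : Q} (c d : Q) {x y : P} :
  bezout_mod r s (relUV r' s') a b -> cong_mod (relAB r s) x y ->
  cong_mod (relAB r' s') (twist r s a b c d x) (twist r s a b c d y).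
Proof. by move=> hab; apply: cong_mod_rmorph; apply: twist_relAB hab. Qed.

Lemma twistK {r s r' s' : R} {a b c d : Q} :
  bezout_mod r s (relUV r' s') a b -> bezout_mod r' s' (relUV r s) c d ->
  forall x, cong_mod (relAB r s) (twist r' s' c d a b (twist r s a b c d x)) x.
Proof.
move=> hab hcd.
have FU := twistU r s a b c d; have FV := twistV r s a b c d.
have FT := twistT r s a b c d; have FC := twist_cst r s a b c d.
have GU := twistU r' s' c d a b; have GV := twistV r' s' c d a b.
have GT := twistT r' s' c d a b; have GC := twist_cst r' s' c d a b.
have Gab := twist_cong a b hcd (bezout_mod_relAB hab).
rewrite (rmorph1 (twist r' s' c d a b)) in Gab.
set F := twist r s a b c d in FU FV FT FC *.
set G := twist r' s' c d a b in GU GV GT GC Gab *.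
clearbody F G.
rewrite rmorphB !rmorphM !GC in Gab.
set f := relAB r s in Gab *.
pose H : {rmorphism P -> P} := (G \o F)%FUN.
have HE y : H y = G (F y) by [].
have HC z : H (cst z) = cst z by rewrite HE FC GC.
(* Modulo f we have 1 + sV = rU, so H U and H V are U and V times G (ra - sb). *)
have HU : cong_mod f (H U) U.
  have -> : H U = U * (cst r * G a%:P - cst s * G b%:P) + (- G a%:P) * f.
    by rewrite HE FU rmorphD rmorphM GC GT /f /relAB; ring.
  exact: cong_mod_trans (cong_mod_addMl _ _) (cong_mod_mulr1 _ Gab).
have HV : cong_mod f (H V) V.
  have -> : H V = V * (cst r * G a%:P - cst s * G b%:P) + (- G b%:P) * f.
    by rewrite HE FV rmorphD rmorphM GC GT /f /relAB; ring.
  exact: cong_mod_trans (cong_mod_addMl _ _) (cong_mod_mulr1 _ Gab).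
have HT : cong_mod f (H T) T.
  have HQ := cong_mod_rmorph_idUV HC HU HV.
  rewrite HE FT rmorphB !rmorphM GU GV.
  apply: (@cong_mod_trans _ _ _ ((d%:P + cst r' * T) * c%:P - (c%:P + cst s' * T) * d%:P)).
    by apply: cong_modB; apply: cong_modMl; apply: HQ.
  have -> : (d%:P + cst r' * T) * c%:P - (c%:P + cst s' * T) * d%:P =
    T * (cst r' * c%:P - cst s' * d%:P) by ring.
  exact/cong_mod_mulr1/bezout_mod_relAB.
exact: cong_mod_rmorph_id HC HU HV HT.
Qed.

Lemma twist_iso (r s r' s' : R) (a b c d : Q) :
  bezout_mod r s (relUV r' s') a b -> bezout_mod r' s' (relUV r s) c d ->
  quot_RAlg_iso (relAB r s) (relAB r' s') (twist r s a b c d).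
Proof.
move=> hab hcd; split; [|split; [|split; [|split; [|split]]]].
- by move=> x y; apply: twist_cong.
- by move=> x y; rewrite rmorphD; apply: cong_mod_refl.
- by move=> x y; rewrite rmorphM; apply: cong_mod_refl.
- by move=> z; rewrite twist_cst; apply: cong_mod_refl.
- move=> x y /(twist_cong a b hcd) hxy.
  apply: cong_mod_trans (cong_mod_sym (twistK hab hcd x)) _.
  exact: cong_mod_trans hxy (twistK hab hcd y).
- by move=> y; exists (twist r' s' c d a b y); apply: twistK.
Qed.

End Twist.

Lemma in_rad2l {A : comNzRingType} (a b : A) : in_rad2 a b a.
Proof. by exists 1%N, 1, 0; rewrite expr1 mul1r mul0r addr0. Qed.

Lemma in_rad2r {A : comNzRingType} (a b : A) : in_rad2 a b b.
Proof. by exists 1%N, 0, 1; rewrite expr1 mul1r mul0r add0r. Qed.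

Theorem mainTheorem4 (Rr : realType) (R : idomainType)
    (iota : {rmorphism CC Rr -> R}) (hfg : fg_algebra iota)
    (r s r' s' : R) (hrad : same_rad2 r s r' s') :
  AT_iso r s r' s'.
Proof.
have [c [d hcd]] :=
  bezout_mod_rad (iffLR (hrad r) (in_rad2l r s)) (iffLR (hrad s) (in_rad2r r s)).
have [a [b hab]] :=
  bezout_mod_rad (iffRL (hrad r') (in_rad2l r' s')) (iffRL (hrad s') (in_rad2r r' s')).
by exists (twist r s a b c d); apply: twist_iso.
Qed.
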